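(* Let $r\ge 2$ and $t\ge 1$ be integers, and let $H$ be an $r$-partite $r$-graph. If $|E(H)|>\frac{t-1}{r}\,|\partial H|$, then $H$ contains (as a subhypergraph) every tight $r$-tree $T$ having $t$ edges.
   Context: An $r$-graph is an $r$-uniform hypergraph. An $r$-graph is $r$-partite if its vertex set can be partitioned into $r$ classes $V_1,\dots,V_r$ such that every edge contains exactly one vertex from each class. The shadow $\partial H$ of an $r$-graph $H$ is the set of all $(r-1)$-element sets contained in some edge of $H$. A tight $r$-tree is any $r$-graph constructed as follows: start with $T_1$ consisting of a single edge $e_1$ and its $r$ vertices; at each step $i\ge 2$ add a new edge $e_i$ containing exactly one new vertex $v_i$ (not in $T_{i-1}$) such that $e_i\setminus\{v_i\}$ is a subset of some edge of $T_{i-1}$, obtaining $T_i$. *)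

From mathcomp Require Import all_boot.
Set Implicit Arguments. Unset Strict Implicit. Unset Printing Implicit Defensive.

Definition r_graph (V : finType) (r : nat) (E : {set {set V}}) : Prop :=
  forall e, e \in E -> #|e| = r.

Definition r_partite (V : finType) (r : nat) (E : {set {set V}}) : Prop :=
  exists c : V -> 'I_r,
    forall e, e \in E -> forall i : 'I_r, #|[set x in e | c x == i]| = 1.

Definition shadow (V : finType) (r : nat) (E : {set {set V}}) : {set {set V}} :=
  [set f : {set V} | (#|f| == r.-1) && [exists e in E, f \subset e]].

Definition tight_tree_seq (W : finType) (r : nat) (s : seq {set W}) : Prop :=
  match s with
  | [::] => False
  | e1 :: _ =>
      #|e1| = r /\
      forall i, 0 < i < size s ->
        #|nth set0 s i| = r /\
        exists v, v \in nth set0 s i /\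
          (forall j, j < i -> v \notin nth set0 s j) /\
          exists j, j < i /\ (nth set0 s i :\ v) \subset nth set0 s j
  end.

Definition tight_tree (W : finType) (r : nat) (ET : {set {set W}}) : Prop :=
  (exists s : seq {set W}, tight_tree_seq r s /\ ET = [set e in s]) /\
  (forall w : W, exists2 e, e \in ET & w \in e).

Definition contains_copy (V W : finType) (E : {set {set V}}) (ET : {set {set W}})
  : Prop :=
  exists phi : W -> V, injective phi /\ forall e, e \in ET -> phi @: e \in E.

From mathcomp Require Import all_boot ssralg zmodp zify.
Set Implicit Arguments. Unset Strict Implicit. Unset Printing Implicit Defensive.
Import GRing.Theory.

(* Let c be the r-partition of H and tau a colouring of the tree T in which
   every edge is rainbow, with colour classes of sizes a_k; then
   \sum_k (a_k - 1) = |V(T)| - r = t - 1.  Call the (r-1)-set e \ x of an edge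
   light if fewer than a_(c x) edges contain it, and delete all edges through
   light sets as long as there are any.  Each shadow set missing colour j is
   responsible for at most a_j - 1 deleted edges, so at most
   \sum_j (a_j - 1) |d_j H| edges disappear, d_j H being the part of the
   shadow missing colour j.  Averaged over the r cyclic shifts of the colours
   of T this is (t-1)/r \sum_j |d_j H| <= (t-1)/r |dH| < |E(H)|, so for some
   shift a non-empty subgraph K without light sets survives.  T embeds
   greedily into K, preserving colours: when the new vertex v of an edge e_i
   is added, the image of e_i \ v is an (r-1)-set of an edge of K missing
   exactly the colour tau v, so it lies in at least a_(tau v) edges of K, each
   adding a distinct vertex of colour tau v, while only a_(tau v) - 1 vertices
   of that colour are already used. *)

Definition rainbow (V : finType) k (c : V -> 'I_k) (E : {set {set V}}) :=
  forall e, e \in E -> {in e &, injective c}.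

Definition class_size (T : finType) k (f : T -> 'I_k) (j : 'I_k) :=
  #|[set x | f x == j]|.

Lemma partite_rainbow (V : finType) r (E : {set {set V}}) :
  r_partite r E -> exists c : V -> 'I_r, rainbow c E.
Proof.
case=> c hc; exists c => e eE x y xe ye cxy.
have /eqP/cards1P [z ez] := hc e eE (c x).
have : y \in [set u in e | c u == c x] by rewrite inE ye cxy eqxx.
have : x \in [set u in e | c u == c x] by rewrite inE xe eqxx.
by rewrite ez !inE => /eqP -> /eqP ->.
Qed.

Lemma rainbow_imset (T : finType) r (c : T -> 'I_r) (e : {set T}) :
  #|e| = r -> {in e &, injective c} -> c @: e = setT.
Proof.
move=> ce inj; apply/eqP.
by rewrite eqEcard subsetT cardsT card_ord card_in_imset // ce leqnn.
Qed.

Lemma rainbow_missing (T : finType) r (c : T -> 'I_r) (e : {set T}) v k :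
  #|e| = r -> {in e &, injective c} -> v \in e -> k \notin c @: (e :\ v) ->
  k = c v.
Proof.
move=> ce inj ve kn; have : k \in c @: e by rewrite rainbow_imset ?inE.
case/imsetP=> u ue kE; rewrite kE in kn *; case: (eqVneq u v) => [-> //|uv].
by case/negP: kn; apply: imset_f; rewrite !inE uv.
Qed.

Lemma inj_notin_imsetD1 (A B : finType) (f : A -> B) (e : {set A}) x :
  {in e &, injective f} -> x \in e -> f x \notin f @: (e :\ x).
Proof.
move=> inj xe; apply/imsetP => -[y /setD1P [yx ye] fxy].
by rewrite (inj x y xe ye fxy) eqxx in yx.
Qed.

Lemma in_inj_update (A B : finType) (f : A -> B) (X : {set A}) v z :
  {in X &, injective f} -> z \notin f @: X ->
  {in v |: X &, injective [eta f with v |-> z]}.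
Proof.
move=> inj zX x y; rewrite !inE /=.
case: eqP => [-> _|_ /= xX]; case: eqP => [-> _|_ /= yX] //.
- by move=> zy; case/negP: zX; rewrite zy imset_f.
- by move=> xz; case/negP: zX; rewrite -xz imset_f.
- exact: inj.
Qed.

Lemma imset_update_notin (A B : finType) (f : A -> B) (Y : {set A}) v z :
  v \notin Y -> [eta f with v |-> z] @: Y = f @: Y.
Proof.
by move=> vY; apply: eq_in_imset => w wY /=; case: eqP wY => // ->; rewrite (negbTE vY).
Qed.

Lemma sum_class_size_surj (T : finType) k (f : T -> 'I_k) :
  (forall j, exists x, f x = j) -> \sum_(j < k) (class_size f j).-1 + k = #|T|.
Proof.
move=> fsurj; transitivity (\sum_(j < k) class_size f j).
  have sum1k : \sum_(j < k) 1 = k by rewrite sum1_card card_ord.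
  rewrite -[X in _ + X]sum1k -big_split /=.
  apply: eq_bigr => j _; rewrite addn1 prednK //.
  by have [x fx] := fsurj j; apply/card_gt0P; exists x; rewrite inE fx.
rewrite -sum1_card (partition_big f xpredT) //=; apply: eq_bigr => j _.
by rewrite /class_size -sum1_card; apply: eq_bigl => x; rewrite inE.
Qed.

Lemma exists_le_average n (F : 'I_n.+1 -> nat) :
  exists i, n.+1 * F i <= \sum_(j < n.+1) F j.
Proof.
case: (arg_minnP F (P := xpredT) (i0 := ord0)) => // i _ imin.
exists i; rewrite -[X in X * _](card_ord n.+1) -sum_nat_const.
by apply: leq_sum => j _; apply: imin.
Qed.

Section TightTreeSeq.
Variables (W : finType) (r : nat) (s : seq {set W}).
Hypothesis hs : tight_tree_seq r s.
Local Notation edge i := (nth set0 s i).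

Lemma tight_tree_seq_gt0 : 0 < size s.
Proof. by move: hs; case: s. Qed.

Lemma card_tight_tree_edge i : i < size s -> #|edge i| = r.
Proof.
move: hs; case: s => [//|e1 s'] /= [h0 h]; case: i => //= i lt.
by have [] := h i.+1 lt.
Qed.

Lemma tight_tree_seq_step i : 0 < i < size s ->
  exists v, [/\ v \in edge i, forall j, j < i -> v \notin edge j &
                exists2 j, j < i & edge i :\ v \subset edge j].
Proof.
move: hs; case: s => [//|e1 s'] /= [_ h] hi.
have [_ [v [vi [vn [j [ji sj]]]]]] := h i hi.
by exists v; split => //; exists j.
Qed.

Lemma tight_tree_seq_uniq : uniq s.
Proof.
have neq a b : a < b < size s -> edge a != edge b.
  case/andP=> ab bs; have [|v [vb vn _]] := @tight_tree_seq_step b.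
    by rewrite bs (leq_ltn_trans _ ab).
  by apply: contraNneq (vn a ab) => ->.
apply/(uniqP set0) => i k; rewrite !inE => ilt klt eik.
case: (ltngtP i k) => [ik|ki|//].
  by have := neq i k; rewrite ik klt eik eqxx => /(_ isT).
by have := neq k i; rewrite ki ilt eik eqxx => /(_ isT).
Qed.

Definition tree_verts m := \bigcup_(i < m) edge i.

Lemma tree_vertsP m w :
  reflect (exists2 i, i < m & w \in edge i) (w \in tree_verts m).
Proof.
apply: (iffP bigcupP) => [[i _ wi]|[i im wi]]; first by exists i.
by exists (Ordinal im).
Qed.

Lemma tree_verts1 : tree_verts 1 = edge 0.
Proof. by rewrite /tree_verts big_ord1. Qed.

Lemma tree_vertsS m : 0 < m < size s ->
  exists v, [/\ v \in edge m, v \notin tree_verts m,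
                tree_verts m.+1 = v |: tree_verts m &
                exists2 j, j < m & edge m :\ v \subset edge j].
Proof.
move=> hm; have [v [vm vn [j jm sj]]] := tight_tree_seq_step hm.
exists v; split => //; last by exists j.
  by apply/tree_vertsP => -[i /vn /negP].
rewrite /tree_verts big_ord_recr /= -/(tree_verts m) -(setD1K vm) setUCA.
congr (v |: _); apply/setUidPl/subsetP => w /(subsetP sj) wj.
by apply/tree_vertsP; exists j.
Qed.

Lemma card_tree_verts m : 0 < m <= size s -> #|tree_verts m| = r + m.-1.
Proof.
elim: m => [//|[|m] IH] hm; first by rewrite tree_verts1 addn0 card_tight_tree_edge.
have [|v [_ vU -> _]] := @tree_vertsS m.+1; first by rewrite ltn0Sn.
rewrite cardsU1 vU IH; first by rewrite /= addnS add1n.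
by rewrite ltn0Sn ltnW.
Qed.

End TightTreeSeq.

Lemma tight_tree_seq_colouring (W : finType) n (s : seq {set W}) :
  tight_tree_seq n.+1 s -> exists tau : W -> 'I_n.+1,
    forall i, i < size s -> {in nth set0 s i &, injective tau}.
Proof.
move=> hs; have s_gt0 := tight_tree_seq_gt0 hs.
suff: forall m, m <= size s -> exists tau : W -> 'I_n.+1,
    forall i, i < m -> {in nth set0 s i &, injective tau}.
  by apply.
elim=> [_|[|m] IH hm]; first by exists (fun _ => ord0).
  set e0 := nth set0 s 0.
  have idx_lt w : w \in e0 -> index w (enum e0) < n.+1.
    by move=> we; rewrite -(card_tight_tree_edge hs s_gt0) cardE index_mem mem_enum.
  exists (fun w => inord (index w (enum e0))) => i.
  rewrite ltnS leqn0 => /eqP -> x y xe ye.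
  move/(congr1 (@nat_of_ord _)); rewrite !inordK ?idx_lt //.
  by apply: (@index_inj _ x (enum e0)); rewrite mem_enum.
have [tau htau] := IH (ltnW hm).
have [|v [vm vn [j jm sj]]] := @tight_tree_seq_step _ _ _ hs m.+1; first by rewrite hm.
set em := nth set0 s m.+1 in vm sj *.
have [k _ kn] : exists2 k, k \in [set: 'I_n.+1] & k \notin tau @: (em :\ v).
  apply/subsetPn; apply/negP => /subset_leq_card; rewrite cardsT card_ord.
  apply/negP; rewrite -ltnNge; apply: leq_ltn_trans (leq_imset_card _ _) _.
  by rewrite -(card_tight_tree_edge hs (i := m.+1)) // (cardsD1 v em) vm.
exists [eta tau with v |-> k] => i; rewrite ltnS leq_eqVlt => /orP [/eqP ->|im].
  rewrite -/em -(setD1K vm); apply: in_inj_update kn.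
  by move=> x y /(subsetP sj) xj /(subsetP sj) yj; apply: (htau j jm).
move=> x y xi yi; rewrite /= !ifN; first exact: (htau i im).
- by apply: contraNneq (vn i im) => <-.
- by apply: contraNneq (vn i im) => <-.
Qed.

Lemma tree_verts_cover (W : finType) (s : seq {set W}) :
  (forall w, exists2 e, e \in [set e in s] & w \in e) -> tree_verts s (size s) = setT.
Proof.
move=> cov; apply/setP => w; rewrite inE; have [e] := cov w.
by rewrite inE => /(nthP set0) [i ilt <-] we; apply/tree_vertsP; exists i.
Qed.

Lemma card_tight_tree_verts (W : finType) r (ET : {set {set W}}) :
  tight_tree r ET -> #|W| = r + #|ET|.-1.
Proof.
case=> -[s [hs ->]] cov; rewrite cardsE (card_uniqP (tight_tree_seq_uniq hs)).
rewrite -cardsT -(tree_verts_cover cov) (card_tree_verts hs) //.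
by rewrite leqnn (tight_tree_seq_gt0 hs).
Qed.

Lemma tight_tree_rainbow (W : finType) n (ET : {set {set W}}) :
  tight_tree n.+1 ET -> exists tau : W -> 'I_n.+1, rainbow tau ET.
Proof.
case=> -[s [hs ->]] _; have [tau htau] := tight_tree_seq_colouring hs.
by exists tau => e; rewrite inE => /(nthP set0) [i ilt <-]; apply: htau.
Qed.

Lemma sum_class_size_tree (W : finType) n (ET : {set {set W}}) (tau : W -> 'I_n.+1) :
  tight_tree n.+1 ET -> rainbow tau ET ->
  \sum_(j < n.+1) (class_size tau j).-1 = #|ET|.-1.
Proof.
move=> hT tau_rb; suff /sum_class_size_surj : forall j, exists w, tau w = j.
  by rewrite (card_tight_tree_verts hT) addnC => /addnI.
have [[s [hs ETs]] _] := hT; have s_gt0 := tight_tree_seq_gt0 hs.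
have e0ET : nth set0 s 0 \in ET by rewrite ETs inE mem_nth.
move=> j; have : j \in tau @: nth set0 s 0.
  by rewrite rainbow_imset ?inE ?(card_tight_tree_edge hs) //; apply: tau_rb.
by case/imsetP => w _ ->; exists w.
Qed.

Section Deletion.
Variables (V : finType) (r : nat) (c : V -> 'I_r).
Implicit Types (E K : {set {set V}}) (d : 'I_r -> nat).

Definition deg E (f : {set V}) := #|[set e in E | f \subset e]|.

Definition rich d K := [forall e in K, forall x in e, d (c x) <= deg K (e :\ x)].

Definition shadow_col j E := [set e :\ x | e in E, x in e & c x == j].

(* Each shadow set missing colour [j] accounts for at most [d j - 1] of the
   edges deleted in [rich_core]. *)
Definition deletion_cost d E := \sum_(j < r) (d j).-1 * #|shadow_col j E|.

Lemma shadow_colP j E f :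
  reflect (exists e x, [/\ e \in E, x \in e, c x = j & f = e :\ x])
          (f \in shadow_col j E).
Proof.
apply: (iffP imset2P) => [[e x eE /[!inE] /andP [xe /eqP cx] ->]|[e [x [eE xe cx ->]]]].
  by exists e, x.
by exists e x; rewrite // inE xe cx eqxx.
Qed.

Lemma shadow_colS j E E' : E' \subset E -> shadow_col j E' \subset shadow_col j E.
Proof.
move=> sE; apply/subsetP => f /shadow_colP [e [x [eE xe cx ->]]].
by apply/shadow_colP; exists e, x; rewrite (subsetP sE).
Qed.

Lemma deletion_cost_delete d E e x : e \in E -> x \in e ->
  deletion_cost d [set e' in E | ~~ (e :\ x \subset e')] + (d (c x)).-1
  <= deletion_cost d E.
Proof.
move=> eE xe; set E' := [set _ in _ | _].
have sE' : E' \subset E by apply/subsetP => e'; rewrite inE => /andP [].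
have lost : #|shadow_col (c x) E'| < #|shadow_col (c x) E|.
  apply: proper_card; rewrite properE shadow_colS //=; apply/subsetPn.
  exists (e :\ x); first by apply/shadow_colP; exists e, x.
  apply/shadow_colP => -[e' [x' [/[!inE] /andP [_ ne'] _ _ exE]]].
  by rewrite exE subD1set in ne'.
rewrite /deletion_cost (bigD1 (c x)) //= [X in _ <= X](bigD1 (c x)) //= addnAC.
apply: leq_add; first by rewrite -mulnSr leq_mul.
by apply: leq_sum => j _; rewrite leq_mul // subset_leq_card // shadow_colS.
Qed.

Lemma rich_core d E :
  exists2 K : {set {set V}}, K \subset E & rich d K /\ #|E| <= #|K| + deletion_cost d E.
Proof.
have [m] := ubnP #|E|; elim: m E => // m IH E ltE.
have [Erich|] := boolP (rich d E); first by exists E; rewrite ?leq_addr.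
case/forall_inPn => e eE /forall_inPn [x xe]; rewrite -ltnNge => light.
set E' := [set e' in E | ~~ (e :\ x \subset e')].
have sE' : E' \subset E by apply/subsetP => e'; rewrite inE => /andP [].
have cardE : #|E| = #|E'| + deg E (e :\ x).
  rewrite -(cardsID [set e' : {set V} | e :\ x \subset e'] E) addnC.
  by congr (_ + _); apply: eq_card => e'; rewrite !inE andbC.
have ltE' : #|E'| < #|E|.
  apply: proper_card; rewrite properE sE'; apply/subsetPn.
  by exists e; rewrite // inE subD1set andbF.
have [|K KE' [Krich cardK]] := IH E'; first exact: leq_trans ltE' _.
exists K; first exact: subset_trans KE' sE'.
split=> //; have := deletion_cost_delete d eE xe; rewrite -/E'.
have : deg E (e :\ x) <= (d (c x)).-1 by rewrite -ltnS prednK // (leq_ltn_trans _ light).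
lia.
Qed.

Lemma sum_card_shadow_col E : r_graph r E -> rainbow c E ->
  \sum_(j < r) #|shadow_col j E| <= #|shadow r E|.
Proof.
move=> Eunif Erb.
have disj i j : i != j -> [disjoint shadow_col i E & shadow_col j E].
  move=> ij; rewrite disjoint_subset.
  apply/subsetP => _ /shadow_colP [e [x [eE xe cx ->]]].
  rewrite inE; apply/shadow_colP => -[e' [x' [e'E x'e' cx' exE]]].
  move/eqP: ij; rewrite -cx -cx'; apply.
  apply: rainbow_missing (Eunif e' e'E) (Erb e' e'E) x'e' _.
  by rewrite -exE; apply: inj_notin_imsetD1 (Erb e eE) xe.
under eq_bigr => j _ do rewrite -sum1_card.
rewrite -(@partition_disjoint_bigcup _ _ _ _ addn _ (fun=> 1) disj) sum1_card.
apply: subset_leq_card.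
apply/bigcupsP => j _; apply/subsetP => _ /shadow_colP [e [x [eE xe _ ->]]].
rewrite inE; apply/andP; split; last by apply/existsP; exists e; rewrite eE subD1set.
by rewrite -(Eunif e eE) (cardsD1 x e) xe.
Qed.

End Deletion.

Lemma class_size_shift (T : finType) n (f : T -> 'I_n.+1) (s0 j : 'I_n.+1) :
  class_size (fun x => f x + s0)%R j = class_size f (j - s0)%R.
Proof.
by apply: eq_card => x; rewrite !inE; apply/eqP/eqP => [<-|->]; rewrite ?addrK ?subrK.
Qed.

Lemma sum_deletion_cost_shift (V T : finType) n (c : V -> 'I_n.+1)
    (E : {set {set V}}) (tau : T -> 'I_n.+1) :
  \sum_(s0 < n.+1) deletion_cost c (class_size (fun w => tau w + s0)%R) E =
  (\sum_(k < n.+1) (class_size tau k).-1) * \sum_(j < n.+1) #|shadow_col c j E|.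
Proof.
rewrite big_distrr /= exchange_big /=; apply: eq_bigr => j _.
rewrite -big_distrl /=; congr (_ * _).
rewrite [RHS](reindex_inj (subrI j)) /=; apply: eq_bigr => s0 _.
by rewrite class_size_shift.
Qed.

Section Extension.
Variables (V : finType) (n : nat) (c : V -> 'I_n.+1) (d : 'I_n.+1 -> nat).
Variable K : {set {set V}}.
Hypotheses (K_unif : r_graph n.+1 K) (K_rainbow : rainbow c K) (K_rich : rich c d K).

Lemma rich_extend g y (U : {set V}) :
  g \in K -> y \in g -> g :\ y \subset U ->
  #|[set u in U | c u == c y]| < d (c y) ->
  exists2 z, z \notin U & c z = c y /\ z |: (g :\ y) \in K.
Proof.
move=> gK yg fU few; set f := g :\ y.
have card_f : #|f| = n by apply/eqP; rewrite -eqSS -(K_unif gK) (cardsD1 y g) yg.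
set Z := [set z | z |: f \in K].
have Z_col z : z \in Z -> c z = c y.
  rewrite inE => zfK; have zf : z \notin f.
    have := K_unif zfK; rewrite cardsU1 card_f.
    by case: (z \in f) => //; rewrite add0n => /n_Sn.
  apply: rainbow_missing (K_unif gK) (K_rainbow gK) yg _; apply/imsetP => -[u uf czu].
  have := K_rainbow zfK (setU11 z f) (setU1r z uf) czu.
  by move=> zu; rewrite zu uf in zf.
have deg_Z : d (c y) <= #|Z|.
  move/forall_inP: K_rich => /(_ g gK)/forall_inP/(_ y yg)/leq_trans; apply.
  apply: leq_trans (leq_imset_card (fun z => z |: f) Z); apply: subset_leq_card.
  apply/subsetP => e; rewrite inE -/f => /andP [eK fe].
  have [z ze zf] : exists2 z, z \in e & z \notin f.
    apply/subsetPn/negP => /subset_leq_card; apply/negP.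
    by rewrite -ltnNge card_f (K_unif eK).
  have ezf : e = z |: f.
    apply/eqP; rewrite eq_sym eqEcard subUset sub1set ze fe cardsU1 zf card_f.
    by rewrite (K_unif eK) add1n ltnSn.
  by apply/imsetP; exists z; rewrite // inE -ezf.
have [z zZ zU] : exists2 z, z \in Z & z \notin U.
  apply/subsetPn; apply: contraTN few => /subsetP ZU; rewrite -leqNgt.
  apply: leq_trans deg_Z _; apply: subset_leq_card; apply/subsetP => z zZ.
  by rewrite inE ZU //= Z_col.
by exists z => //; split; [apply: Z_col | rewrite inE in zZ].
Qed.

End Extension.

Section TreeEmbedding.
Variables (V W : finType) (n : nat) (c : V -> 'I_n.+1) (tau : W -> 'I_n.+1).
Variables (K : {set {set V}}) (s : seq {set W}).
Hypotheses (K_unif : r_graph n.+1 K) (K_rainbow : rainbow c K).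
Hypothesis K_rich : rich c (class_size tau) K.
Hypothesis hs : tight_tree_seq n.+1 s.
Hypothesis tau_rainbow : forall i, i < size s -> {in nth set0 s i &, injective tau}.
Local Notation edge i := (nth set0 s i).

Definition colour_embedding (phi : W -> V) m :=
  [/\ {in tree_verts s m &, injective phi},
      forall i, i < m -> phi @: edge i \in K
    & {in tree_verts s m, forall w, c (phi w) = tau w}].

Lemma colour_embedding1 : K != set0 -> exists phi, colour_embedding phi 1.
Proof.
case/set0Pn => g gK; have s_gt0 := tight_tree_seq_gt0 hs.
have col_in_g w : exists x, (x \in g) && (c x == tau w).
  have : tau w \in c @: g by rewrite rainbow_imset ?inE ?K_unif //; apply: K_rainbow.
  by case/imsetP => x xg ->; exists x; rewrite xg eqxx.
pose phi w := xchoose (col_in_g w).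
have phi_g w : phi w \in g by have /andP [] := xchooseP (col_in_g w).
have phi_col w : c (phi w) = tau w by have /andP [_ /eqP] := xchooseP (col_in_g w).
have phi_inj : {in edge 0 &, injective phi}.
  by move=> x y xe ye /(congr1 c); rewrite !phi_col; apply: (tau_rainbow s_gt0).
exists phi; split; rewrite ?tree_verts1 // => i; rewrite ltnS leqn0 => /eqP ->.
suff -> : phi @: edge 0 = g by [].
apply/eqP; rewrite eqEcard; apply/andP; split.
  by apply/subsetP => _ /imsetP [w _ ->].
by rewrite card_in_imset // (K_unif gK) (card_tight_tree_edge hs s_gt0).
Qed.

Lemma colour_embedding_frontier phi m v j :
  m < size s -> colour_embedding phi m -> v \in edge m ->
  j < m -> edge m :\ v \subset edge j ->
  exists2 y, y \in phi @: edge j &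
    phi @: (edge m :\ v) = phi @: edge j :\ y /\ c y = tau v.
Proof.
move=> mlt [phi_inj phi_K phi_col] vm jm sj.
set g := phi @: edge j; have gK : g \in K := phi_K j jm.
have emU : edge m :\ v \subset tree_verts s m.
  by apply/subsetP => w /(subsetP sj) wj; apply/tree_vertsP; exists j.
set f := phi @: (edge m :\ v).
have card_f : #|f| = n.
  rewrite card_in_imset; last first.
    by move=> x y /(subsetP emU) xU /(subsetP emU); apply: phi_inj.
  by apply/eqP; rewrite -eqSS -(card_tight_tree_edge hs mlt) (cardsD1 v (edge m)) vm.
have [y yg yf] : exists2 y, y \in g & y \notin f.
  apply/subsetPn/negP => /subset_leq_card; apply/negP.
  by rewrite -ltnNge card_f (K_unif gK).
have fE : f = g :\ y.
  apply/eqP; rewrite eqEcard subsetD1 imsetS //= yf card_f.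
  by have := cardsD1 y g; rewrite yg (K_unif gK) add1n => -[<-]; rewrite leqnn.
exists y => //; split=> //; apply/esym/(rainbow_missing (K_unif gK) (K_rainbow gK) yg).
rewrite -fE /f -imset_comp (eq_in_imset (g := tau)).
  exact: inj_notin_imsetD1 (tau_rainbow mlt) vm.
by move=> w /(subsetP emU); apply: phi_col.
Qed.

Lemma colour_embeddingS phi m : 0 < m < size s -> colour_embedding phi m ->
  exists phi', colour_embedding phi' m.+1.
Proof.
move=> hm emb; have [phi_inj phi_K phi_col] := emb.
have [v [vm vU Um1 [j jm sj]]] := tree_vertsS hs hm.
have [y yg [fE cy]] := colour_embedding_frontier (andP hm).2 emb vm jm sj.
have vnot w : w \in tree_verts s m -> w != v.
  by move=> wU; apply/eqP => wv; rewrite -wv wU in vU.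
set U := phi @: tree_verts s m.
have fU : phi @: edge j :\ y \subset U.
  rewrite -fE imsetS //; apply/subsetP => w /(subsetP sj) wj.
  by apply/tree_vertsP; exists j.
(* Used vertices of colour [tau v] are images of the other vertices of that colour. *)
have few : #|[set u in U | c u == c y]| < class_size tau (c y).
  rewrite cy /class_size (cardsD1 v [set w | tau w == tau v]) inE eqxx add1n ltnS.
  apply: (leq_trans _ (leq_imset_card phi _)); apply: subset_leq_card.
  apply/subsetP => u; rewrite !inE => /andP [/imsetP [w wU ->] cw]; apply: imset_f.
  by rewrite !inE -(phi_col w wU) cw andbT vnot.
have [z zU [cz zK]] := rich_extend K_unif K_rainbow K_rich (phi_K j jm) yg fU few.
exists [eta phi with v |-> z]; rewrite /colour_embedding Um1; split.
- exact: in_inj_update.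
- move=> i; rewrite ltnS leq_eqVlt => /orP [/eqP ->|im].
    by rewrite -(setD1K vm) imsetU1 imset_update_notin ?setD11 //= eqxx fE.
  rewrite imset_update_notin ?phi_K //.
  by apply: contraNN vU => vi; apply/tree_vertsP; exists i.
- move=> w /setU1P [->|wU] /=; first by rewrite eqxx cz.
  by rewrite ifN ?phi_col ?vnot.
Qed.

Lemma colour_embedding_all : K != set0 -> exists phi, colour_embedding phi (size s).
Proof.
move=> K0; suff: forall m, 0 < m <= size s -> exists phi, colour_embedding phi m.
  by apply; rewrite leqnn (tight_tree_seq_gt0 hs).
elim=> [//|[_|m IH] hm]; first exact: colour_embedding1.
have [|phi emb] := IH; first by rewrite ltn0Sn ltnW.
by apply: colour_embeddingS emb; rewrite ltn0Sn.
Qed.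

End TreeEmbedding.

Lemma rich_contains_tight_tree (V W : finType) n (c : V -> 'I_n.+1)
    (tau : W -> 'I_n.+1) (K : {set {set V}}) (ET : {set {set W}}) :
  r_graph n.+1 K -> rainbow c K -> rich c (class_size tau) K -> K != set0 ->
  tight_tree n.+1 ET -> rainbow tau ET -> contains_copy K ET.
Proof.
move=> K_unif K_rb K_rich K0 [[s [hs ETs]] cov] tau_rb.
have tau_s i : i < size s -> {in nth set0 s i &, injective tau}.
  by move=> ilt; apply: tau_rb; rewrite ETs inE mem_nth.
have [phi [phi_inj phi_K _]] := colour_embedding_all K_unif K_rb K_rich hs tau_s K0.
rewrite ETs in cov; have Uall := tree_verts_cover cov.
exists phi; split; first by move=> x y; apply: phi_inj; rewrite Uall.
by move=> e; rewrite ETs inE => /(nthP set0) [i ilt <-]; apply: phi_K.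
Qed.

Theorem theorem1p2 (r t : nat) (hr : 2 <= r) (ht : 1 <= t)
  (V : finType) (E : {set {set V}})
  (hunif : r_graph r E) (hpart : r_partite r E)
  (hdens : (t.-1) * #|shadow r E| < r * #|E|)
  (W : finType) (ET : {set {set W}})
  (hT : tight_tree r ET) (hTt : #|ET| = t) :
  contains_copy E ET.
Proof.
have [n rn] : exists n, r = n.+1 by exists r.-1; rewrite prednK // ltnW.
subst r; have [c E_rb] := partite_rainbow hpart.
have [tau tau_rb] := tight_tree_rainbow hT.
pose cost s0 := deletion_cost c (class_size (fun w => tau w + s0)%R) E.
have [s0 cheap] := exists_le_average cost.
rewrite sum_deletion_cost_shift (sum_class_size_tree hT tau_rb) hTt in cheap.
have cost_lt : cost s0 < #|E|.
  rewrite -(ltn_pmul2l (ltn0Sn n)); apply: leq_ltn_trans cheap (leq_ltn_trans _ hdens).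
  by rewrite leq_mul2l sum_card_shadow_col ?orbT.
have [K KE [K_rich cardK]] := rich_core c (class_size (fun w => tau w + s0)%R) E.
have K0 : K != set0.
  by apply: contraTneq cost_lt => K0; move: cardK; rewrite K0 cards0 leqNgt.
have [phi [phi_inj phi_K]] : contains_copy K ET.
  apply: rich_contains_tight_tree K_rich K0 hT _.
  - by move=> e /(subsetP KE); apply: hunif.
  - by move=> e /(subsetP KE); apply: E_rb.
  - by move=> e eET x y xe ye /= /addIr; apply: (tau_rb e eET).
by exists phi; split => // e /phi_K /(subsetP KE).
Qed.
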